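(* Let $\mathcal{H}$ be a real Hilbert space, let $A,B:\mathcal{H}\rightrightarrows\mathcal{H}$ be operators and let $\beta\in{]0,1[}$. Then \[ \operatorname{zer}\left(A^{(\beta)}+B^{(\beta)}\right)=\beta J_{\frac{1}{2(1-\beta)}(A+B)}(0). \] Consequently, $\operatorname{zer}\left(A^{(\beta)}+B^{(\beta)}\right)\neq\emptyset$ if and only if $0\in\operatorname{ran}\left(\operatorname{Id}+\frac{1}{2(1-\beta)}(A+B)\right)$.
   Context: The resolvent of an operator $T$ is $J_T:=(\operatorname{Id}+T)^{-1}$, i.e. $J_T(x)=\{y: x\in y+T(y)\}$ (a set). The $\beta$-strengthening of $A$ is $A^{(\beta)}(x):=\left(A+(1-\beta)\operatorname{Id}\right)\left(\frac{x}{\beta}\right)$. $\operatorname{zer}T=\{x:0\in T(x)\}$; $\operatorname{ran}$ denotes the range. *)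

From HB Require Import structures.
From mathcomp Require Import all_boot all_order all_algebra.
From mathcomp Require Import classical_sets reals.
Set Implicit Arguments. Unset Strict Implicit. Unset Printing Implicit Defensive.
Import GRing.Theory Num.Theory.
Local Open Scope ring_scope.
Local Open Scope classical_set_scope.

Definition op (H : Type) := H -> set H.

Section Ops.
Variables (R : realType) (H : lmodType R).

Definition opId : op H := fun x => [set x].
Definition opAdd (A B : op H) : op H :=
  fun x => [set z | exists a b, A x a /\ B x b /\ z = a + b].
Definition opScale (c : R) (T : op H) : op H :=
  fun x => [set z | exists t, T x t /\ z = c *: t].
Definition resolvent (T : op H) (x : H) : set H :=
  [set y | opAdd opId T y x].
Definition strengthening (beta : R) (A : op H) : op H :=
  fun x => opAdd A (opScale (1 - beta) opId) (beta^-1 *: x).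
Definition zer (T : op H) : set H := [set x | T x 0].
Definition ran (T : op H) : set H := [set y | exists x, T x y].
End Ops.

From HB Require Import structures.
From mathcomp Require Import all_boot all_order all_algebra.
From mathcomp Require Import classical_sets reals.
Set Implicit Arguments. Unset Strict Implicit.
Import Order.TTheory GRing.Theory Num.Theory.
Local Open Scope ring_scope.
Local Open Scope classical_set_scope.

(* Writing [y = x / beta], each strengthened operator contributes
   [(1 - beta) y], so [0 \in A^(beta) x + B^(beta) x] reads
   [0 \in (A + B) y + 2 (1 - beta) y]; dividing by [2 (1 - beta)] this is
   [0 \in y + (A + B) y / (2 (1 - beta))], i.e. [y \in J (0)].  The second
   claim holds because [ran (Id + T)] contains [x] iff [J_T x] is nonempty. *)

Lemma image_nonemptyE (T U : Type) (f : T -> U) (S : set T) :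
  f @` S !=set0 <-> S !=set0.
Proof. by split=> [[_ [y Sy _]] | /(image_nonempty f)]; first exists y. Qed.

Section StrengtheningZeros.
Variables (R : realType) (H : lmodType R).
Implicit Types (A B T : op H) (x y z : H) (c k : R).

Lemma opAdd_scale_idE T c x z :
  opAdd T (opScale c (@opId R H)) x z <-> exists2 t, T x t & z = t + c *: x.
Proof.
split=> [[t [b [Tt [[s [sx ->]] ->]]]] | [t Tt ->]].
  by exists t => //; rewrite sx.
by exists t, (c *: x); split=> //; split=> //; exists x.
Qed.

Lemma strengtheningE beta A x z :
  strengthening beta A x z <->
  exists2 a, A (beta^-1 *: x) a & z = a + (1 - beta) *: (beta^-1 *: x).
Proof. exact: opAdd_scale_idE. Qed.

Lemma zer_add_strengthening beta A B x :
  zer (opAdd (strengthening beta A) (strengthening beta B)) x <->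
  opAdd (opAdd A B) (opScale (2 * (1 - beta)) (@opId R H)) (beta^-1 *: x) 0.
Proof.
set y := beta^-1 *: x.
have sum_shifts a b : a + (1 - beta) *: y + (b + (1 - beta) *: y) =
    a + b + (2 * (1 - beta)) *: y.
  by rewrite addrACA -scalerDl mulrDl mul1r.
rewrite opAdd_scale_idE; split.
- move=> [_ [_ [/strengtheningE[a Aa ->] [/strengtheningE[b Bb ->] ab0]]]].
  by exists (a + b); [exists a, b | rewrite -sum_shifts].
- move=> [_ [a [b [Aa [Bb ->]]]] ab0].
  exists (a + (1 - beta) *: y), (b + (1 - beta) *: y).
  split; first by apply/strengtheningE; exists a.
  split; first by apply/strengtheningE; exists b.
  by rewrite sum_shifts.
Qed.

Lemma resolvent_scaleV k T x y : k != 0 ->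
  resolvent (opScale k^-1 T) x y <-> opAdd T (opScale k (@opId R H)) y (k *: x).
Proof.
move=> k0; rewrite opAdd_scale_idE; split.
- move=> [a [b [-> [[t [Tt ->]] ->]]]]; exists t => //.
  by rewrite scalerDr scalerA divff // scale1r addrC.
- move=> [t Tt kx]; exists y, (k^-1 *: t); split=> //; split; first by exists t.
  by rewrite -[x](scalerK k0) kx scalerDr scalerA mulVf // scale1r addrC.
Qed.

Lemma image_scaleE c (S : set H) : c != 0 ->
  (fun y => c *: y) @` S = [set x | S (c^-1 *: x)].
Proof.
move=> c0; apply/seteqP; split=> [_ [y Sy <-] | x Sx] /=.
  by rewrite scalerK.
by exists (c^-1 *: x); rewrite // scalerA divff // scale1r.
Qed.

Lemma ran_add_id_resolvent T x :
  ran (opAdd (@opId R H) T) x <-> resolvent T x !=set0.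
Proof. by []. Qed.

End StrengtheningZeros.

Theorem proposition3p4 (R : realType) (H : lmodType R) (A B : op H) (beta : R)
  (hb0 : 0 < beta) (hb1 : beta < 1) :
  zer (opAdd (strengthening beta A) (strengthening beta B)) =
    (fun y => beta *: y) @`
      resolvent (opScale (2 * (1 - beta))^-1 (opAdd A B)) 0
  /\
  (zer (opAdd (strengthening beta A) (strengthening beta B)) !=set0 <->
    ran (opAdd (@opId R H) (opScale (2 * (1 - beta))^-1 (opAdd A B))) 0).
Proof.
have beta0 : beta != 0 by rewrite gt_eqF.
have k0 : 2 * (1 - beta) != 0.
  by rewrite mulf_neq0 ?pnatr_eq0 // subr_eq0 eq_sym lt_eqF.
have zerE : zer (opAdd (strengthening beta A) (strengthening beta B)) =
    (fun y => beta *: y) @`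
      resolvent (opScale (2 * (1 - beta))^-1 (opAdd A B)) 0.
  rewrite image_scaleE //; apply/seteqP; split=> x /=.
  - by move/zer_add_strengthening; rewrite (resolvent_scaleV _ _ _ k0) scaler0.
  - by move/(resolvent_scaleV _ _ _ k0); rewrite scaler0 -zer_add_strengthening.
split=> //.
by rewrite ran_add_id_resolvent zerE image_nonemptyE.
Qed.
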